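(* Let $K$ be a commutative ring with unit and let $\mathfrak X$ be a class of representations in $Rep\text{-}K$ which is a variety (respectively, a pseudovariety, a quasivariety, a universal class). Then $\mathfrak X$ can be defined (as $T^*$) by a set $T$ of action-type formulas if and only if $\mathfrak X$ is saturated, right-hereditary and right-local.
   Context: $Rep\text{-}K$ is the variety of two-sorted algebras (representations) $(V,G)$, where $V$ is a $K$-module, $G$ a group, and $\circ: V\times G\to V$ an action such that $a\mapsto a\circ g$ is $K$-linear, $(a\circ g_1)\circ g_2=a\circ g_1g_2$, and $a\circ 1=a$. Morphisms are pairs $(\alpha,\beta)$ with $\alpha$ a $K$-module homomorphism, $\beta$ a group homomorphism, and $(a\circ g)^\alpha=a^\alpha\circ g^\beta$. For countable sets $X,Y$, let $F=F(Y)$ be the free group on $Y$, $KF$ its group algebra, and $W=(XKF,F)$ the free representation ($XKF$ the free right $KF$-module on $X$, with $w\circ f=wf$). Homomorphisms $\mu=(\alpha,\beta):W\to(V,G)$ correspond to pairs of maps $X\to V$, $Y\to G$. Formulas are built from equalities $w\equiv0$ ($w\in XKF$) and $f\equiv1$ ($f\in F$) using $\vee,\wedge,\neg,\exists x,\exists y$; action-type formulas use only equalities $w\equiv0$ and quantifiers $\exists x$, $x\in X$. The value $Val_{(V,G)}(u)\subseteq Hom(W,(V,G))$: $\mu\in Val(w\equiv0)$ iff $w^\alpha=0$; $\mu\in Val(f\equiv1)$ iff $f^\beta=1$; connectives act as Boolean operations; $\mu\in Val(\exists x\,u)$ iff some $\nu\in Val(u)$ agrees with $\mu$ except possibly at $x$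 (similarly for $\exists y$). A formula holds in $(V,G)$ if its value is all of $Hom(W,(V,G))$; for a set $T$ of formulas, $T^*$ is the class of representations in which all formulas of $T$ hold. A variety is a class $T^*$ with $T$ a set of equalities; a pseudovariety: $T$ a set of disjunctions $u_1\vee\dots\vee u_n$ of equalities; a quasivariety: $T$ a set of quasi-identities $u_1\wedge\dots\wedge u_n\Rightarrow u$ with $u_i,u$ equalities; a universal class: $T$ a set of formulas $u_1\vee\dots\vee u_n\vee\neg v_1\vee\dots\vee\neg v_m$ with $u_i,v_j$ equalities. The faithful representation of $(V,G)$ is $(V,\overline G)$, $\overline G=G/N$ with $N$ the kernel of the action. $\mathfrak X$ is saturated if $(V,G)\in\mathfrak X\iff(V,\overline G)\in\mathfrak X$; right-hereditary if $(V,G)\in\mathfrak X$ implies $(V,H)\in\mathfrak X$ for all subgroups $H\le G$; right-local if $(V,G)\in\mathfrak X$ whenever $(V,H)\in\mathfrak X$ for all finitely generated $H\le G$. *)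

From HB Require Import structures.
From mathcomp Require Import all_boot all_algebra.
From Stdlib Require Import ProofIrrelevance FunctionalExtensionality
  PropExtensionality IndefiniteDescription.
Set Implicit Arguments. Unset Strict Implicit. Unset Printing Implicit Defensive.
Import GRing.Theory.
Local Open Scope ring_scope.

Record Grp := MkGrp {
  gT :> Type;
  gmul : gT -> gT -> gT;
  ginv : gT -> gT;
  gone : gT;
  gmulA : forall a b c, gmul a (gmul b c) = gmul (gmul a b) c;
  gmul1 : forall a, gmul gone a = a;
  gmulV : forall a, gmul (ginv a) a = gone }.

Record Rep (K : comPzRingType) := MkRep {
  rV : lmodType K;
  rG : Grp;
  ract : rV -> rG -> rV;
  ract_add : forall g a b, ract (a + b) g = ract a g + ract b g;
  ract_scale : forall g (k : K) a, ract (k *: a) g = k *: ract a g;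
  ract_mul : forall a g1 g2, ract (ract a g1) g2 = ract a (gmul g1 g2);
  ract_one : forall a, ract a (gone rG) = a }.

Record subgrp (G : Grp) := MkSubgrp {
  sg_mem : G -> Prop;
  sg_one : sg_mem (gone G);
  sg_mul : forall a b, sg_mem a -> sg_mem b -> sg_mem (gmul a b);
  sg_inv : forall a, sg_mem a -> sg_mem (ginv a) }.

Section SubGrp.
Variables (G : Grp) (H : subgrp G).
Definition sub_T := {g : G | sg_mem H g}.
Definition sub_mul (a b : sub_T) : sub_T :=
  exist _ (gmul (proj1_sig a) (proj1_sig b)) (sg_mul (proj2_sig a) (proj2_sig b)).
Definition sub_inv (a : sub_T) : sub_T :=
  exist _ (ginv (proj1_sig a)) (sg_inv (proj2_sig a)).
Definition sub_one : sub_T := exist _ (gone G) (sg_one H).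
Lemma sub_eq (a b : sub_T) : proj1_sig a = proj1_sig b -> a = b.
Proof. case: a b => [a pa] [b pb] /= e; subst b; by rewrite (proof_irrelevance _ pa pb). Qed.
Lemma sub_mulA a b c : sub_mul a (sub_mul b c) = sub_mul (sub_mul a b) c.
Proof. by apply: sub_eq; rewrite /= gmulA. Qed.
Lemma sub_mul1 a : sub_mul sub_one a = a.
Proof. by apply: sub_eq; rewrite /= gmul1. Qed.
Lemma sub_mulV a : sub_mul (sub_inv a) a = sub_one.
Proof. by apply: sub_eq; rewrite /= gmulV. Qed.
Definition subGrp : Grp := MkGrp sub_mulA sub_mul1 sub_mulV.
End SubGrp.

Definition fin_gen (G : Grp) (H : subgrp G) : Prop :=
  exists s : seq G, (forall x, List.In x s -> sg_mem H x) /\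
    (forall L : subgrp G, (forall x, List.In x s -> sg_mem L x) ->
       forall g, sg_mem H g -> sg_mem L g).

Section SubRep.
Variables (K : comPzRingType) (R : Rep K) (H : subgrp (rG R)).
Definition subRep : Rep K :=
  @MkRep K (rV R) (subGrp H) (fun a h => ract a (proj1_sig h))
    (fun g => @ract_add K R (proj1_sig g))
    (fun g => @ract_scale K R (proj1_sig g))
    (fun a g1 g2 => @ract_mul K R a (proj1_sig g1) (proj1_sig g2))
    (@ract_one K R).
End SubRep.

(* The faithful representation (V, G/N), N the kernel of the action.   *)
(* G/N is realised literally as the set of cosets gN = {h | a∘h = a∘g for all a}. *)
Section Faithful.
Variables (K : comPzRingType) (R : Rep K).
Local Notation G := (rG R).
Local Notation act := (@ract K R).
Definition coset (g : G) : G -> Prop := fun h => forall a, act a h = act a g.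
Definition QT := {P : G -> Prop | exists g, P = coset g}.
Definition qrep (P : QT) : G := proj1_sig (constructive_indefinite_description _ (proj2_sig P)).
Lemma qrepP (P : QT) : proj1_sig P = coset (qrep P).
Proof. exact: (proj2_sig (constructive_indefinite_description _ (proj2_sig P))). Qed.
Definition qmk (g : G) : QT := exist _ (coset g) (ex_intro _ g erefl).
Lemma coset_eq g g' : (forall a, act a g = act a g') -> coset g = coset g'.
Proof.
move=> e; apply: functional_extensionality => h; apply: propositional_extensionality.
by split=> H a; rewrite H e.
Qed.
Lemma QT_eq (P Q : QT) : (forall a, act a (qrep P) = act a (qrep Q)) -> P = Q.
Proof.
move=> e; case: P Q e => [P pP] [Q pQ] e.
have E : P = Q.
  have /= -> := qrepP (exist _ P pP); have /= -> := qrepP (exist _ Q pQ).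
  exact: coset_eq.
subst Q; by rewrite (proof_irrelevance _ pP pQ).
Qed.
Lemma qrep_mk g a : act a (qrep (qmk g)) = act a g.
Proof.
have e : coset g = coset (qrep (qmk g)) by exact: (qrepP (qmk g)).
have : coset g g by []. by rewrite e => ->.
Qed.
Definition qmul (P Q : QT) : QT := qmk (gmul (qrep P) (qrep Q)).
Definition qinv (P : QT) : QT := qmk (ginv (qrep P)).
Definition qone : QT := qmk (gone G).
Lemma qmulA P Q S : qmul P (qmul Q S) = qmul (qmul P Q) S.
Proof.
apply: QT_eq => a; rewrite !qrep_mk -!ract_mul !qrep_mk -!ract_mul.
by [].
Qed.
Lemma qmul1 P : qmul qone P = P.
Proof. by apply: QT_eq => a; rewrite qrep_mk -ract_mul qrep_mk ract_one. Qed.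
Lemma qmulV P : qmul (qinv P) P = qone.
Proof.
apply: QT_eq => a; rewrite !qrep_mk -ract_mul qrep_mk ract_mul gmulV //.
Qed.
Definition quotGrp : Grp := MkGrp qmulA qmul1 qmulV.
Lemma qact_mul a (P Q : quotGrp) :
  act (act a (qrep P)) (qrep Q) = act a (qrep (gmul P Q)).
Proof. by rewrite /= qrep_mk ract_mul. Qed.
Lemma qact_one a : act a (qrep (gone quotGrp)) = a.
Proof. by rewrite /= qrep_mk ract_one. Qed.
Definition faithfulRep : Rep K :=
  @MkRep K (rV R) quotGrp (fun a P => act a (qrep P))
    (fun g => @ract_add K R (qrep g))
    (fun g => @ract_scale K R (qrep g))
    qact_mul qact_one.
End Faithful.

Definition saturated (K : comPzRingType) (X : Rep K -> Prop) : Prop :=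
  forall R : Rep K, X R <-> X (faithfulRep R).
Definition right_hereditary (K : comPzRingType) (X : Rep K -> Prop) : Prop :=
  forall (R : Rep K) (H : subgrp (rG R)), X R -> X (subRep H).
Definition right_local (K : comPzRingType) (X : Rep K -> Prop) : Prop :=
  forall R : Rep K,
    (forall H : subgrp (rG R), fin_gen H -> X (subRep H)) -> X R.

(* Syntax.  Y = X = nat (countable sets of variables).                 *)
(* gterm: terms denoting the elements of the free group F = F(Y).      *)
Inductive gterm :=
  | GVar of nat | GOne | GMul of gterm & gterm | GInv of gterm.
(* mterm K: terms denoting the elements of the free KF-module XKF:     *)
Inductive mterm (K : Type) :=
  | MZero | MVar of nat | MAdd of mterm K & mterm K
  | MScale of K & mterm K | MAct of mterm K & gterm.
Arguments MZero {K}.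

Inductive formula (K : Type) :=
  | FEqV of mterm K
  | FEqG of gterm
  | FOr of formula K & formula K
  | FAnd of formula K & formula K
  | FNot of formula K
  | FExV of nat & formula K
  | FExG of nat & formula K.

Fixpoint geval (G : Grp) (b : nat -> G) (f : gterm) : G :=
  match f with
  | GVar y => b y
  | GOne => gone G
  | GMul f1 f2 => gmul (geval b f1) (geval b f2)
  | GInv f1 => ginv (geval b f1)
  end.

Fixpoint meval (K : comPzRingType) (R : Rep K) (a : nat -> rV R) (b : nat -> rG R)
  (w : mterm K) : rV R :=
  match w with
  | MZero => 0
  | MVar x => a x
  | MAdd w1 w2 => meval a b w1 + meval a b w2
  | MScale k w1 => k *: meval a b w1
  | MAct w1 f => ract (meval a b w1) (geval b f)
  end.

Definition upd (T : Type) (s : nat -> T) (n : nat) (v : T) : nat -> T :=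
  fun m => if m == n then v else s m.

(* mu = (alpha, beta) in Val(u), with mu given by its values on X and Y. *)
Fixpoint sat (K : comPzRingType) (R : Rep K) (a : nat -> rV R) (b : nat -> rG R)
  (u : formula K) : Prop :=
  match u with
  | FEqV w => meval a b w = 0
  | FEqG f => geval b f = gone (rG R)
  | FOr u1 u2 => sat a b u1 \/ sat a b u2
  | FAnd u1 u2 => sat a b u1 /\ sat a b u2
  | FNot u1 => ~ sat a b u1
  | FExV x u1 => exists v, sat (upd a x v) b u1
  | FExG y u1 => exists g, sat a (upd b y g) u1
  end.

(* u holds in R : Val(u) = Hom(W, R). *)
Definition holds (K : comPzRingType) (R : Rep K) (u : formula K) : Prop :=
  forall (a : nat -> rV R) (b : nat -> rG R), @sat K R a b u.

Definition Tstar (K : comPzRingType) (T : formula K -> Prop) (R : Rep K) : Prop :=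
  forall u, T u -> holds R u.

Definition defined_by (K : comPzRingType) (X : Rep K -> Prop) (T : formula K -> Prop) :=
  forall R, X R <-> Tstar T R.

Definition is_equality (K : Type) (u : formula K) : Prop :=
  match u with FEqV _ | FEqG _ => True | _ => False end.

Inductive disj_of (K : Type) (P : formula K -> Prop) : formula K -> Prop :=
  | disj_one u : P u -> disj_of P u
  | disj_cons u v : P u -> disj_of P v -> disj_of P (FOr u v).
Inductive conj_of (K : Type) (P : formula K -> Prop) : formula K -> Prop :=
  | conj_one u : P u -> conj_of P u
  | conj_cons u v : P u -> conj_of P v -> conj_of P (FAnd u v).

(* u1 ∧ ... ∧ un ⇒ u, with ⇒ read as ¬(...) ∨ u *)
Definition is_quasi_identity (K : Type) (u : formula K) : Prop :=
  exists c e, conj_of (@is_equality K) c /\ is_equality e /\ u = FOr (FNot c) e.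

Definition is_literal (K : Type) (u : formula K) : Prop :=
  is_equality u \/ exists v, is_equality v /\ u = FNot v.
Definition is_universal_formula (K : Type) (u : formula K) : Prop :=
  disj_of (@is_literal K) u.

Inductive action_type (K : Type) : formula K -> Prop :=
  | at_eq w : action_type (FEqV w)
  | at_or u v : action_type u -> action_type v -> action_type (FOr u v)
  | at_and u v : action_type u -> action_type v -> action_type (FAnd u v)
  | at_not u : action_type u -> action_type (FNot u)
  | at_ex x u : action_type u -> action_type (FExV x u).

Definition class_of_kind (K : comPzRingType) (P : formula K -> Prop)
  (X : Rep K -> Prop) : Prop :=
  exists T : formula K -> Prop, (forall u, T u -> P u) /\ defined_by X T.

Definition is_variety (K : comPzRingType) := class_of_kind (@is_equality K).
Definition is_pseudovariety (K : comPzRingType) :=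
  class_of_kind (disj_of (@is_equality K)).
Definition is_quasivariety (K : comPzRingType) := class_of_kind (@is_quasi_identity K).
Definition is_universal_class (K : comPzRingType) :=
  class_of_kind (@is_universal_formula K).

From mathcomp Require Import all_boot all_algebra.
From Stdlib Require Import Classical IndefiniteDescription Lia.
From Stdlib Require List.
Set Implicit Arguments. Unset Strict Implicit. Unset Printing Implicit Defensive.
Import GRing.Theory.

(* An action-type formula mentions group elements only through the linear maps
   by which they act, so its truth is the same in (V, G), in (V, G/N), and in
   (V, H) for any subgroup H containing the finitely many group elements it
   talks about; this gives saturation, right-heredity and right-locality.
   Conversely, a class defined by quantifier-free formulas is determined by
   its faithful members, and in a faithful representation the atom f = 1 is
   equivalent to the action-type formula "x f = x for every x". So for these
   classes saturation alone yields a definition by action-type formulas. *)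

Lemma gmul_ginv (G : Grp) (a : G) : gmul a (ginv a) = gone G.
Proof.
rewrite -[gmul a _]gmul1 -{1}(gmulV (ginv a)) -gmulA (gmulA (ginv a) a) gmulV gmul1.
exact: gmulV.
Qed.

Fixpoint gterm_gvar_bound (f : gterm) : nat :=
  match f with
  | GVar y => y.+1
  | GOne => 0
  | GMul f1 f2 => maxn (gterm_gvar_bound f1) (gterm_gvar_bound f2)
  | GInv f1 => gterm_gvar_bound f1
  end.

Fixpoint mterm_gvar_bound (K : Type) (w : mterm K) : nat :=
  match w with
  | MZero | MVar _ => 0
  | MAdd w1 w2 => maxn (mterm_gvar_bound w1) (mterm_gvar_bound w2)
  | MScale _ w1 => mterm_gvar_bound w1
  | MAct w1 f => maxn (mterm_gvar_bound w1) (gterm_gvar_bound f)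
  end.

Fixpoint formula_gvar_bound (K : Type) (u : formula K) : nat :=
  match u with
  | FEqV w => mterm_gvar_bound w
  | FEqG f => gterm_gvar_bound f
  | FOr u v | FAnd u v => maxn (formula_gvar_bound u) (formula_gvar_bound v)
  | FNot u | FExV _ u | FExG _ u => formula_gvar_bound u
  end.

Section Transfer.
Variables (K : comPzRingType) (R1 R2 : Rep K).
Variables (phi : {linear rV R1 -> rV R2}) (phi_bij : bijective phi).
Variables (b1 : nat -> rG R1) (b2 : nat -> rG R2).

Definition acts_alike (n : nat) : Prop :=
  forall y, y < n -> forall v, phi (ract v (b1 y)) = ract (phi v) (b2 y).

Lemma acts_alike_le m n : m <= n -> acts_alike n -> acts_alike m.
Proof. by move=> le_mn h y lt_ym; apply: h; apply: leq_trans le_mn. Qed.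

Lemma geval_transfer f : acts_alike (gterm_gvar_bound f) ->
  forall v, phi (ract v (geval b1 f)) = ract (phi v) (geval b2 f).
Proof.
elim: f => [y||f1 IH1 f2 IH2|f IH] /= h v.
- exact: h.
- by rewrite !ract_one.
- rewrite -!ract_mul IH2 ?IH1 //; apply: acts_alike_le h.
  + exact: leq_maxl.
  + exact: leq_maxr.
- set w := ract v (ginv (geval b1 f)).
  have -> : v = ract w (geval b1 f) by rewrite /w ract_mul gmulV ract_one.
  by rewrite IH // ract_mul gmul_ginv ract_one.
Qed.

Lemma meval_transfer a1 a2 w : (forall x, a2 x = phi (a1 x)) ->
  acts_alike (mterm_gvar_bound w) -> phi (meval a1 b1 w) = meval a2 b2 w.
Proof.
move=> ha; elim: w => [|x|w1 IH1 w2 IH2|k w IH|w IH f] /= h.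
- exact: raddf0.
- by rewrite ha.
- by rewrite linearD IH1 ?IH2 //; apply: acts_alike_le h; [exact: leq_maxr | exact: leq_maxl].
- by rewrite linearZ IH.
- by rewrite geval_transfer ?IH //; apply: acts_alike_le h; [exact: leq_maxl | exact: leq_maxr].
Qed.

Lemma sat_transfer u : action_type u -> forall a1 a2, (forall x, a2 x = phi (a1 x)) ->
  acts_alike (formula_gvar_bound u) -> (sat a1 b1 u <-> sat a2 b2 u).
Proof.
elim=> {u} [w|u v _ IHu _ IHv|u v _ IHu _ IHv|u _ IH|x u _ IH] a1 a2 ha /= h.
- rewrite -(meval_transfer ha h) -(raddf0 phi).
  by split=> [-> //|]; apply: bij_inj.
- by rewrite (IHu a1 a2) ?(IHv a1 a2) //; apply: acts_alike_le h;
    [exact: leq_maxr | exact: leq_maxl].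
- by rewrite (IHu a1 a2) ?(IHv a1 a2) //; apply: acts_alike_le h;
    [exact: leq_maxr | exact: leq_maxl].
- by rewrite (IH a1 a2).
- have upd_phi v1 y : upd a2 x (phi v1) y = phi (upd a1 x v1 y).
    by rewrite /upd; case: (y == x).
  split=> [[v1 hv]|[v2 hv]].
  + by exists (phi v1); apply/(IH (upd a1 x v1)).
  + case: phi_bij => psi _ psiK; exists (psi v2).
    by apply/(IH _ (upd a2 x (phi (psi v2)))); rewrite // psiK.
Qed.

End Transfer.

Definition gen_subgrp (G : Grp) (s : seq G) : subgrp G :=
  @MkSubgrp G
    (fun g => forall L : subgrp G, (forall x, List.In x s -> sg_mem L x) -> sg_mem L g)
    (fun L _ => sg_one L)
    (fun a b ha hb L hL => sg_mul (ha L hL) (hb L hL))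
    (fun a ha L hL => sg_inv (ha L hL)).

Lemma gen_subgrp_fin_gen (G : Grp) (s : seq G) : fin_gen (gen_subgrp s).
Proof. by exists s; split=> [x sx L|L hL g]; apply. Qed.

Lemma subgrp_valuation (G : Grp) (H : subgrp G) (b : nat -> G) n :
  (forall y, y < n -> sg_mem H (b y)) ->
  exists b' : nat -> subGrp H, forall y, y < n -> proj1_sig (b' y) = b y.
Proof.
move=> memH.
apply: (functional_choice (fun y (h : subGrp H) => y < n -> proj1_sig h = b y)) => y.
case: (boolP (y < n)) => [lt_yn|_]; last by exists (sub_one H).
by exists (exist _ (b y) (memH y lt_yn)).
Qed.

Section ActionTypeFormulas.
Variable K : comPzRingType.
Implicit Types (R : Rep K) (u : formula K).

Let idfun_bij (V : lmodType K) : bijective (@idfun V) :=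
  Bijective (fun _ => erefl) (fun _ => erefl).

Lemma holds_faithfulRep R u : action_type u ->
  (holds R u <-> holds (faithfulRep R) u).
Proof.
move=> hu; split=> h a b.
- apply: (proj1 (@sat_transfer K R (faithfulRep R) idfun (idfun_bij _)
    (fun y => qrep (b y)) b u hu a a (fun _ => erefl) _)); first by [].
  exact: h.
- apply: (proj2 (@sat_transfer K R (faithfulRep R) idfun (idfun_bij _)
    b (fun y => qmk (b y)) u hu a a (fun _ => erefl) _)).
    by move=> y _ v /=; rewrite qrep_mk.
  exact: h.
Qed.

Lemma holds_subRep R (H : subgrp (rG R)) u : action_type u ->
  holds R u -> holds (subRep H) u.
Proof.
move=> hu h a b.
apply: (proj1 (@sat_transfer K R (subRep H) idfun (idfun_bij _)
  (fun y => proj1_sig (b y)) b u hu a a (fun _ => erefl) _)); first by [].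
exact: h.
Qed.

Lemma holds_of_fin_gen_subRep R u : action_type u ->
  (forall H : subgrp (rG R), fin_gen H -> holds (subRep H) u) -> holds R u.
Proof.
move=> hu h a b; set n := formula_gvar_bound u.
pose H := gen_subgrp (map b (List.seq 0 n)).
have memH y : y < n -> sg_mem H (b y).
  move=> /ltP lt_yn L; apply; apply: List.in_map; apply/List.in_seq; lia.
have [b' b'E] := subgrp_valuation memH.
apply: (proj2 (@sat_transfer K R (subRep H) idfun (idfun_bij _)
  b b' u hu a a (fun _ => erefl) _)).
- by move=> y lt_yn v /=; rewrite b'E.
- exact: h (gen_subgrp_fin_gen _) a b'.
Qed.

Section ActionDefinable.
Variables (X : Rep K -> Prop) (T : formula K -> Prop).
Hypotheses (T_action : forall u, T u -> action_type u) (defX : defined_by X T).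

Lemma action_definable_saturated : saturated X.
Proof.
move=> R; rewrite !defX.
by split=> h u Tu; apply/(holds_faithfulRep R (T_action Tu)); exact: h.
Qed.

Lemma action_definable_right_hereditary : right_hereditary X.
Proof.
move=> R H; rewrite !defX => h u Tu.
exact: holds_subRep (T_action Tu) (h u Tu).
Qed.

Lemma action_definable_right_local : right_local X.
Proof.
move=> R h; apply/defX => u Tu; apply: holds_of_fin_gen_subRep (T_action Tu) _.
by move=> H /h /defX; apply.
Qed.

End ActionDefinable.

Definition faithful R : Prop :=
  forall g : rG R, (forall v, ract v g = v) -> g = gone (rG R).

Lemma faithfulRep_faithful R : faithful (faithfulRep R).
Proof. by move=> g hg; apply: QT_eq => v; rewrite qrep_mk ract_one; apply: hg. Qed.

Fixpoint quantifier_free u : Prop :=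
  match u with
  | FEqV _ | FEqG _ => True
  | FOr u v | FAnd u v => quantifier_free u /\ quantifier_free v
  | FNot u => quantifier_free u
  | FExV _ _ | FExG _ _ => False
  end.

(* The clause for group quantifiers is junk: the translation is only meant for
   quantifier-free formulas. *)
Fixpoint action_form u : formula K :=
  match u with
  | FEqV w => FEqV w
  | FEqG f =>
      FNot (FExV 0 (FNot (FEqV (MAdd (MAct (MVar K 0) f) (MScale (-1)%R (MVar K 0))))))
  | FOr u v => FOr (action_form u) (action_form v)
  | FAnd u v => FAnd (action_form u) (action_form v)
  | FNot u => FNot (action_form u)
  | FExV x u => FExV x (action_form u)
  | FExG _ u => action_form u
  end.

Lemma action_type_action_form u : action_type (action_form u).
Proof. by elim: u => //= *; do ?constructor. Qed.

Lemma sat_action_form R (a : nat -> rV R) (b : nat -> rG R) u :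
  faithful R -> quantifier_free u -> (sat a b u <-> sat a b (action_form u)).
Proof.
move=> faithR; elim: u a => [w|f|u IHu v IHv|u IHu v IHv|u IH|x u IH|y u IH] a //=.
- rewrite /upd /=; split=> [-> [v]|fixf]; first by rewrite ract_one scaleN1r subrr.
  apply: faithR => v; apply: NNPP => nfix; apply: fixf; exists v => /eqP.
  by rewrite scaleN1r subr_eq0 => /eqP.
- by case=> qf_u qf_v; rewrite IHu // IHv.
- by case=> qf_u qf_v; rewrite IHu // IHv.
- by move=> qf_u; rewrite IH.
Qed.

Lemma holds_action_form R u : faithful R -> quantifier_free u ->
  (holds R u <-> holds R (action_form u)).
Proof.
by move=> faithR qf_u; split=> h a b; apply/(sat_action_form a b faithR qf_u); apply: h.
Qed.

Lemma action_theory_defines (X : Rep K -> Prop) (T0 : formula K -> Prop) :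
  saturated X -> (forall u, T0 u -> quantifier_free u) -> defined_by X T0 ->
  defined_by X (fun u => action_type u /\ forall R, X R -> holds R u).
Proof.
move=> satX qfT0 defX R; split=> [XR u [_ hu]|hR]; first exact: hu.
apply/satX/defX => u T0u.
have qf_u := qfT0 u T0u; have at_u := action_type_action_form u.
have X_form R' : X R' -> holds R' (action_form u).
  move=> /satX /defX /(_ u T0u).
  move=> /(holds_action_form (@faithfulRep_faithful R') qf_u).
  by move=> /(holds_faithfulRep R' at_u).
apply/(holds_action_form (@faithfulRep_faithful R) qf_u)/(holds_faithfulRep R at_u).
exact: hR (conj at_u X_form).
Qed.

Lemma quantifier_free_equality u : is_equality u -> quantifier_free u.
Proof. by case: u. Qed.

Lemma quantifier_free_literal u : is_literal u -> quantifier_free u.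
Proof.
case=> [/quantifier_free_equality //|[v [/quantifier_free_equality qf_v ->]]].
exact: qf_v.
Qed.

Lemma quantifier_free_disj (P : formula K -> Prop) u :
  (forall v, P v -> quantifier_free v) -> disj_of P u -> quantifier_free u.
Proof. by move=> qfP; elim=> [v /qfP|v w /qfP] //= qf_v _. Qed.

Lemma quantifier_free_conj (P : formula K -> Prop) u :
  (forall v, P v -> quantifier_free v) -> conj_of P u -> quantifier_free u.
Proof. by move=> qfP; elim=> [v /qfP|v w /qfP] //= qf_v _. Qed.

Lemma quantifier_free_quasi_identity u : is_quasi_identity u -> quantifier_free u.
Proof.
case=> c [e [conj_c [eq_e ->]]] /=; split.
- exact: quantifier_free_conj quantifier_free_equality conj_c.
- exact: quantifier_free_equality.
Qed.

Lemma quantifier_free_definable (X : Rep K -> Prop) :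
  is_variety X \/ is_pseudovariety X \/ is_quasivariety X \/ is_universal_class X ->
  exists T0 : formula K -> Prop,
    (forall u, T0 u -> quantifier_free u) /\ defined_by X T0.
Proof.
case=> [|[|[]]] [T [kindT defX]]; exists T; split=> // u /kindT.
- exact: quantifier_free_equality.
- exact: quantifier_free_disj quantifier_free_equality.
- exact: quantifier_free_quasi_identity.
- exact: quantifier_free_disj quantifier_free_literal.
Qed.

End ActionTypeFormulas.

Theorem theorem2p2 (K : comPzRingType) (X : Rep K -> Prop) :
  (is_variety X \/ is_pseudovariety X \/ is_quasivariety X \/ is_universal_class X) ->
  ((exists T : formula K -> Prop, (forall u, T u -> action_type u) /\ defined_by X T)
   <-> saturated X /\ right_hereditary X /\ right_local X).
Proof.
move=> kindX; split.
- case=> T [T_action defX]; split; last split.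
  + exact: action_definable_saturated T_action defX.
  + exact: action_definable_right_hereditary T_action defX.
  + exact: action_definable_right_local T_action defX.
- case=> satX _; have [T0 [qfT0 defX]] := quantifier_free_definable kindX.
  exists (fun u => action_type u /\ forall R, X R -> holds R u).
  by split=> [u []|]; last exact: action_theory_defines qfT0 defX.
Qed.
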